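(* Let $x=(x_1,\dots,x_5)\in\mathbb{Z}_{\ge 0}^5$ and let $y=(y_1,\dots,y_5)$ be obtained from $x$ by a move of the exact $(5,2)$ nim, i.e. there are two distinct indices $a\neq b$ with $y_a<x_a$, $y_b<x_b$, and $y_c=x_c$ for all $c\notin\{a,b\}$. Suppose the move changes the leader, i.e. there is an index $i\in\{a,b\}$ with $x_i=\max_{1\le c\le 5}x_c$ and $y_i<\max_{1\le c\le 5}y_c$. Then it is not the case that both $\hat x$ and $\hat y$ are P-positions of Moore's nim $(4,\le 2)$. In other words, there is no move in the exact $(5,2)$ nim from a $*P$ position to a $*P$ position that changes the leader.
   Context: Positions of the exact $(5,2)$ nim are vectors of $5$ nonnegative integers (pile sizes); a move consists of choosing exactly two piles and removing a positive number of stones from each of them. For a position $z\in\mathbb{Z}_{\ge0}^5$, the reduced position $\hat z\in\mathbb{Z}_{\ge0}^4$ is the multiset of pile sizes obtained from $z$ by deleting one copy of its maximum pile (the ''leader''); equivalently, if $z$ is sorted as $z_{(1)}\le\dots\le z_{(5)}$, then $\hat z=(z_{(1)},z_{(2)},z_{(3)},z_{(4)})$. Moore's nim $(4,\le 2)$ is played on $4$ piles, a move removing a positive number of stones from at least one and at most two piles; the player unable to move loses. A position $w=(w_1,\dots,w_4)$ of it is a P-position iff for every bit position $j\ge 0$ the number of indices $r\in\{1,2,3,4\}$ whose $j$-th binary digit of $w_r$ equals $1$ is divisible by $3$ (i.e. equals $0$ or $3$). A position $z$ of the exact $(5,2)$ nim is called $*P$ if $\hat z$ is a P-position of Moore's nim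 $(4,\le 2)$. *)

From mathcomp Require Import all_boot all_order.
Set Implicit Arguments. Unset Strict Implicit. Unset Printing Implicit Defensive.

Definition pos5 := 'I_5 -> nat.

Definition maxpile (z : pos5) : nat := \max_(c : 'I_5) z c.

(* Reduced position: the pile sizes sorted increasingly, with the last
   (one copy of the maximum, the "leader") removed: (z_(1),...,z_(4)). *)
Definition reduced (z : pos5) : seq nat :=
  take 4 (sort leq [seq z c | c : 'I_5]).

Definition bit (j n : nat) : bool := odd (n %/ 2 ^ j).

Definition moore_P (w : seq nat) : Prop :=
  size w = 4 /\ forall j : nat, 3 %| count (bit j) w.

Definition starP (z : pos5) : Prop := moore_P (reduced z).

Definition move52 (x y : pos5) (a b : 'I_5) : Prop :=
  [/\ a != b, y a < x a, y b < x b & forall c, c != a -> c != b -> y c = x c].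

From mathcomp Require Import all_boot all_order zify.

(* Say the leader of x is pile a, the other moved pile is b, and the leader
   of y is pile k.  Deleting the leaders, x^ and y^ share all piles except
   {x_b} versus {y_a} when k = b, and {x_b, x_k} versus {y_a, y_b} otherwise.
   If both are P-positions of Moore's nim, then at every bit position the
   numbers of ones among the exchanged piles agree modulo 3, hence agree,
   being at most 2; so the exchanged piles have equal sums.  This contradicts
   y_a < y_k and y_b < x_b. *)

Lemma bit0 n : bit 0 n = odd n.
Proof. by rewrite /bit expn0 divn1. Qed.

Lemma bitS j n : bit j.+1 n = bit j n./2.
Proof. by rewrite /bit expnS divnMA divn2. Qed.

Lemma count_bitS j s : count (bit j.+1) s = count (bit j) (map half s).
Proof. by rewrite count_map; apply: eq_count => n; rewrite /= bitS. Qed.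

Lemma sumn_half s : sumn s = (sumn (map half s)).*2 + count odd s.
Proof. by elim: s => //= n s ->; lia. Qed.

Lemma eq_sumn_count_bit s t :
  (forall j, count (bit j) s = count (bit j) t) -> sumn s = sumn t.
Proof.
move: {2}(sumn s + sumn t) (leqnn (sumn s + sumn t)) => n.
elim: n s t => [|n IHn] s t le_st eq_bits; first lia.
have eq_odd : count odd s = count odd t.
  by rewrite -!(eq_count bit0) eq_bits.
have eq_half : sumn (map half s) = sumn (map half t).
  apply: IHn => [|j]; last by rewrite -!count_bitS.
  by move: le_st; rewrite (sumn_half s) (sumn_half t); lia.
by rewrite sumn_half eq_half eq_odd -sumn_half.
Qed.

Lemma eq_sumn_exchange (u v : seq nat) (K : nat -> nat) :
  size u <= 2 -> size v <= 2 ->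
  (forall j, 3 %| count (bit j) u + K j) ->
  (forall j, 3 %| count (bit j) v + K j) ->
  sumn u = sumn v.
Proof.
move=> size_u size_v Pu Pv; apply: eq_sumn_count_bit => j.
have := count_size (bit j) u; have := count_size (bit j) v.
by move: (Pu j) (Pv j); lia.
Qed.

Lemma count_image (z : pos5) (P : pred nat) :
  count P [seq z c | c : 'I_5] = \sum_c P (z c).
Proof.
rewrite -sum1_count big_map enumT big_mkcond /=.
by apply: eq_bigr => c _; case: (P _).
Qed.

Lemma perm_reduced (z : pos5) m :
  z m = maxpile z -> perm_eq (z m :: reduced z) [seq z c | c : 'I_5].
Proof.
rewrite /reduced => zm_max; set s := sort leq _.
have perm_s : perm_eq s [seq z c | c : 'I_5] by rewrite perm_sort.
have size_s : size s = 5 by rewrite (perm_size perm_s) size_map -cardE card_ord.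
have sorted_s : sorted leq s by apply: sort_sorted; exact: leq_total.
have mem_s c : z c \in s by rewrite (perm_mem perm_s) map_f ?mem_enum.
have last_s : nth 0 s 4 = z m.
  apply/eqP; rewrite eqn_leq; apply/andP; split.
    have : nth 0 s 4 \in s by rewrite mem_nth ?size_s.
    by rewrite (perm_mem perm_s) zm_max => /mapP [c _ ->]; exact: leq_bigmax.
  rewrite -(nth_index 0 (mem_s m)).
  have lt_index : index (z m) s < 5 by rewrite -size_s index_mem.
  by apply: (sorted_leq_nth leq_trans leqnn 0 sorted_s);
    rewrite ?inE ?size_s // -ltnS.
rewrite -(permPr perm_s) -[X in perm_eq _ X](cat_take_drop 4 s).
rewrite (drop_nth 0) ?size_s // last_s.
by rewrite drop_oversize ?size_s // cats1 perm_sym perm_rcons.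
Qed.

Lemma count_reduced (z : pos5) m (P : pred nat) :
  z m = maxpile z -> count P (reduced z) = \sum_(c | c != m) P (z c).
Proof.
by move=> /perm_reduced/permP/(_ P); rewrite /= count_image (bigD1 m) //= => /addnI.
Qed.

Lemma move52_sym {x y : pos5} {a b} : move52 x y a b -> move52 x y b a.
Proof.
case=> ab ya_lt yb_lt y_eq_x; split; rewrite 1?eq_sym //.
by move=> c cb ca; apply: y_eq_x.
Qed.

Section LeaderChange.

Context {x y : pos5} {a b : 'I_5}.
Hypotheses (ab : a != b) (yb_lt : y b < x b).
Hypothesis y_eq_x : forall c, c != a -> c != b -> y c = x c.
Hypothesis starP_x : forall t, 3 %| \sum_(c | c != a) bit t (x c).

Lemma leader_to_moved_pile :
  y a < y b -> ~ (forall t, 3 %| \sum_(c | c != b) bit t (y c)).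
Proof.
move=> ya_lt_yb starP_y.
pose K t := \sum_(c | (c != a) && (c != b)) bit t (x c).
suff: sumn [:: x b] = sumn [:: y a] by rewrite /=; lia.
apply: (@eq_sumn_exchange _ _ K) => // t /=.
  by move: (starP_x t); rewrite (bigD1 b) 1?eq_sym // addn0.
have rest : \sum_(c | (c != b) && (c != a)) bit t (y c) = K t.
  by apply: eq_big => [c | c /andP [cb ca]]; rewrite ?y_eq_x // andbC.
by move: (starP_y t); rewrite (bigD1 a) // rest addn0.
Qed.

Lemma leader_to_unmoved_pile {k : 'I_5} :
  k != a -> k != b -> y a < y k -> ~ (forall t, 3 %| \sum_(c | c != k) bit t (y c)).
Proof.
move=> ka kb ya_lt_yk starP_y.
have yk_eq : y k = x k by exact: y_eq_x.
pose K t := \sum_(c | (c != a) && (c != b) && (c != k)) bit t (x c).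
suff: sumn [:: x b; x k] = sumn [:: y a; y b] by rewrite /=; lia.
apply: (@eq_sumn_exchange _ _ K) => // t /=.
  move: (starP_x t); rewrite (bigD1 b) 1?eq_sym // (bigD1 k) ?ka ?kb //=.
  by rewrite addn0 addnA.
have rest : \sum_(c | (c != k) && (c != a) && (c != b)) bit t (y c) = K t.
  apply: eq_big => [c | c /andP [/andP [ck ca] cb]]; last by rewrite y_eq_x.
  by case: (c != a); case: (c != b); case: (c != k).
move: (starP_y t); rewrite (bigD1 a) 1?eq_sym // (bigD1 b) /=; last first.
  by rewrite ![b == _]eq_sym kb ab.
by rewrite rest addn0 addnA.
Qed.

End LeaderChange.

Theorem lemma11 (x y : 'I_5 -> nat) (a b i : 'I_5) :
  move52 x y a b ->
  (i = a \/ i = b) ->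
  x i = maxpile x ->
  y i < maxpile y ->
  ~ (starP x /\ starP y).
Proof.
move=> move_xy i_ab; wlog -> : a b move_xy {i_ab} / i = a.
  move=> wlog_ia; case: i_ab => ia; first exact: wlog_ia _ _ move_xy ia.
  exact: wlog_ia _ _ (move52_sym move_xy) ia.
move=> xa_max ya_lt_max [[_ starP_x] [_ starP_y]].
case: move_xy => ab _ yb_lt y_eq_x.
have [k /esym yk_max] := eq_bigmax y (ltac:(by rewrite card_ord) : 0 < #|'I_5|).
have {}starP_x t : 3 %| \sum_(c | c != a) bit t (x c) by rewrite -count_reduced.
have {}starP_y t : 3 %| \sum_(c | c != k) bit t (y c) by rewrite -count_reduced.
rewrite /maxpile -yk_max in ya_lt_max.
have ka : k != a by apply: contraTneq ya_lt_max => ->; rewrite ltnn.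
have [kb | kb] := eqVneq k b.
  subst k.
  exact: (leader_to_moved_pile ab yb_lt y_eq_x starP_x ya_lt_max starP_y).
exact: (leader_to_unmoved_pile ab yb_lt y_eq_x starP_x ka kb ya_lt_max starP_y).
Qed.
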